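(* Let $\epsilon>0$, $\beta>1$, $\theta\in(0,1)$, $T\in\mathbb{N}$, and $B\ge T$, and set $k=\lfloor B/T\rfloor+1$. Let $r>0$ denote the optimal clustering radius for $\lceil\beta k\rceil$ clusters. Then there exists an instance of the UVP problem (with total budget $B$, maximum per-configuration budget $T$, smoothness parameter $\epsilon$) satisfying the concavity assumption, whose configuration set has optimal $\lceil\beta k\rceil$-center radius $r$, such that no algorithm can achieve an expected accuracy exceeding $\left(\theta+\frac{1}{\theta(\beta-1)}\right)(1-\epsilon r)\cdot A(\mathbf{x}^\star,T)$, where $\mathbf{x}^\star$ denotes the optimal configuration.
   Context: UVP problem: $A:\mathbb{R}^d\times[T]\to[0,1]$ is unknown ($[T]=\{1,\dots,T\}$); a finite $\mathcal{X}\subset\mathbb{R}^d$ is known; goal $\max_{b_1,\dots,b_n}\max_iA(\mathbf{x}_i,b_i)$ subject to $\sum_ib_i\le B$; obtaining $A(\mathbf{x},b)$ requires evaluating $A(\mathbf{x},1),\dots,A(\mathbf{x},b)$ in sequence, costing $b$ units. Instances satisfy Assumption 1 (monotonicity): $b_1\le b_2\Rightarrow A(\mathbf{x},b_1)\le A(\mathbf{x},b_2)$, and Assumption 2 (smoothness): for all $\mathbf{x}_i,\mathbf{x}_j\in\mathcal{X}$, $\min_{b\in[T]}A(\mathbf{x}_i,b)/A(\mathbf{x}_j,b)\ge1-\epsilon\|\mathbf{x}_i-\mathbf{x}_j\|_2$ (ratio $=1$ if both are $0$, $+\infty$ if only the denominator is $0$). Concavity assumption: for all $\mathbf{x}\in\mathcal{X}$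 and $b\in\{2,\dots,T-1\}$, $A(\mathbf{x},b+1)-A(\mathbf{x},b)\le A(\mathbf{x},b)-A(\mathbf{x},b-1)$. The optimal clustering radius for $m$ clusters is $\min_{\mathcal{C}\subseteq\mathcal{X},|\mathcal{C}|=m}\max_{\mathbf{x}\in\mathcal{X}}\min_{\mathbf{c}\in\mathcal{C}}\|\mathbf{x}-\mathbf{c}\|_2$. $\mathbf{x}^\star$ maximizes $A(\cdot,T)$ over $\mathcal{X}$. An algorithm (possibly randomized) adaptively evaluates values within budget $B$ and outputs $\mathbf{x}^{Alg}$; its expected accuracy is $\mathbb{E}[A(\mathbf{x}^{Alg},T)]$. *)

From HB Require Import structures.
From mathcomp Require Import all_boot all_order all_algebra.
From mathcomp Require Import reals.
Set Implicit Arguments. Unset Strict Implicit. Unset Printing Implicit Defensive.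
Import Order.TTheory GRing.Theory Num.Theory.
Local Open Scope ring_scope.

Section UVP.
Variable R : realType.

Definition dist2 (d : nat) (x y : 'rV[R]_d) : R :=
  Num.sqrt (\sum_(i < d) (x 0 i - y 0 i) ^+ 2).

(* r is the optimal clustering radius of X for m clusters:
   min_{C subset X, |C| = m} max_{x in X} min_{c in C} ||x - c||_2 = r. *)
Definition opt_cluster_radius (d : nat) (X : seq 'rV[R]_d) (m : nat) (r : R)
  : Prop :=
  (exists C : seq 'rV[R]_d, [/\ uniq C, {subset C <= X}, size C = m &
      forall x, x \in X -> exists2 c, c \in C & dist2 x c <= r])
  /\ (forall C : seq 'rV[R]_d, uniq C -> {subset C <= X} -> size C = m ->
      exists2 x, x \in X & forall c, c \in C -> r <= dist2 x c).

(* "ratio a/b >= c" with the paper's convention: ratio = 1 if a = b = 0,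
   +oo if only the denominator b is 0. *)
Definition ratio_ge (a b c : R) : Prop :=
  (b = 0 -> a = 0 -> c <= 1) /\ (b <> 0 -> c <= a / b).

Definition uvp_range (d T : nat) (A : 'rV[R]_d -> nat -> R) : Prop :=
  forall x b, (1 <= b <= T)%N -> 0 <= A x b <= 1.

Definition uvp_monotone (d T : nat) (A : 'rV[R]_d -> nat -> R) : Prop :=
  forall x b1 b2, (1 <= b1)%N -> (b1 <= b2)%N -> (b2 <= T)%N -> A x b1 <= A x b2.

Definition uvp_smooth (d T : nat) (X : seq 'rV[R]_d) (eps : R)
  (A : 'rV[R]_d -> nat -> R) : Prop :=
  forall xi xj, xi \in X -> xj \in X -> forall b, (1 <= b <= T)%N ->
    ratio_ge (A xi b) (A xj b) (1 - eps * dist2 xi xj).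

Definition uvp_concave (d T : nat) (X : seq 'rV[R]_d)
  (A : 'rV[R]_d -> nat -> R) : Prop :=
  forall x, x \in X -> forall b, (2 <= b)%N -> (b <= T.-1)%N ->
    A x b.+1 - A x b <= A x b - A x b.-1.

Definition is_dist (I : finType) (p : {ffun I -> R}) : Prop :=
  (forall i, 0 <= p i) /\ \sum_i p i = 1.

Definition history (n : nat) := seq ('I_n * R).

Definition level (n : nat) (h : history n) (i : 'I_n) : nat :=
  count (fun p => p.1 == i) h.

(* Expected final accuracy of a (randomized, adaptive) algorithm given as a
   behavioural strategy:
   - [q h] : distribution over [Some i] (pay one unit to evaluate the next
     budget level of configuration i, i.e. A(x_i, level+1)) and [None] (stop);
   - [out h] : distribution of the output configuration given the history.
   [val i b] = A(x_i, b).  [f] is the remaining budget.  A query on a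
   configuration already evaluated up to T stops the run. *)
Fixpoint exp_acc (n T : nat) (val : 'I_n -> nat -> R)
  (q : history n -> {ffun option 'I_n -> R})
  (out : history n -> {ffun 'I_n -> R}) (f : nat) (h : history n) : R :=
  let stop := \sum_j out h j * val j T in
  match f with
  | 0 => stop
  | f'.+1 =>
      q h None * stop +
      \sum_i q h (Some i) *
        (if (level h i < T)%N
         then exp_acc T val q out f' (rcons h (i, val i (level h i).+1))
         else stop)
  end.

End UVP.

From HB Require Import structures.
From mathcomp Require Import all_boot all_order all_algebra.
From mathcomp Require Import reals.
From mathcomp Require Import lra zify ring.
Set Implicit Arguments.
Unset Strict Implicit.
Unset Printing Implicit Defensive.
Import Order.TTheory GRing.Theory Num.Theory.
Local Open Scope ring_scope.

(* Take m := ceil (beta k) clusters of N points: points of a cluster are at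
   mutual distance r, distinct clusters so far apart that smoothness says
   nothing across them.  All accuracy curves are linear with final value
   e := 1 - eps r, except that outside one cluster j they stay flat after
   level t0 := floor (theta T), and one point of cluster j climbs to 1.
   Pushing a configuration past level t0 costs more than theta T units, so
   with B < k T the algorithm does so, or outputs, on some cluster with
   probability at most P := (B / (t0 + 1) + 1) / m, and then cannot exploit
   the cluster where the curves keep rising: it gets at most
   e (theta + (1 - theta) P).  Inside that cluster it touches, or outputs,
   some point with probability at most (B + 1) / N, so making that point
   the optimum changes nothing more; (1 - theta) P < 1 / (theta (beta - 1))
   and N large conclude. *)

Section Averages.
Variable R : realType.

Lemma sumr_option (I : finType) (F : option I -> R) :
  \sum_o F o = F None + \sum_i F (Some i).
Proof.
rewrite (bigD1 None) //=; congr (_ + _).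
rewrite (reindex_omap (@Some I) id); last by case.
by apply: eq_bigl => i; rewrite eqxx.
Qed.

Lemma mean_option (I : finType) (p : {ffun option I -> R}) (a : R) (F : I -> R) :
  p None * a + \sum_i p (Some i) * F i = \sum_o p o * oapp F a o.
Proof. by rewrite sumr_option. Qed.

Lemma dist_mean_le (I : finType) (p : {ffun I -> R}) (F : I -> R) (a : R) :
  is_dist p -> (forall i, F i <= a) -> \sum_i p i * F i <= a.
Proof.
move=> [p_ge0 p_sum1] F_le; rewrite -[a]mul1r -p_sum1 big_distrl /=.
by apply: ler_sum => i _; apply: ler_wpM2l.
Qed.

Lemma dist_mean_ge (I : finType) (p : {ffun I -> R}) (F : I -> R) (a : R) :
  is_dist p -> (forall i, a <= F i) -> a <= \sum_i p i * F i.
Proof.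
move=> [p_ge0 p_sum1] F_ge; rewrite -[a]mul1r -p_sum1 big_distrl /=.
by apply: ler_sum => i _; apply: ler_wpM2l.
Qed.

Lemma sum_indicator_le1 (J : finType) (P : pred J) :
  (forall a b, P a -> P b -> a = b) -> \sum_j ((P j)%:R : R) <= 1.
Proof.
move=> P_single; case: (pickP P) => [a Pa|P0]; last first.
  by rewrite big1 ?ler01 // => j _; rewrite P0.
rewrite (bigD1 a) //= Pa big1 ?addr0 // => j ja.
by case: (boolP (P j)) => // Pj; move: ja; rewrite (P_single _ _ Pj Pa) ?eqxx.
Qed.

Lemma exists_le_mean M (F : 'I_M -> R) (S : R) :
  (0 < M)%N -> \sum_j F j <= S -> exists j, F j <= S / M%:R.
Proof.
move=> M_gt0 sum_le; case: (pickP (fun j => F j <= S / M%:R)) => [j|gt]; first by exists j.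
have : \sum_(j < M) (S / M%:R) < \sum_j F j.
  apply: ltr_sum; first by apply/hasP; exists (Ordinal M_gt0); rewrite ?mem_index_enum.
  by move=> j _; rewrite ltNge gt.
rewrite sumr_const card_ord -[_ *+ M]mulr_natr divfK ?pnatr_eq0 -?lt0n //.
by rewrite ltNge sum_le.
Qed.

End Averages.

Section Strategy.
Variables (R : realType) (n T : nat).
Variables (q : history R n -> {ffun option 'I_n -> R})
          (out : history R n -> {ffun 'I_n -> R}).
Hypotheses (q_dist : forall h, is_dist (q h)) (out_dist : forall h, is_dist (out h)).

Lemma level_rcons (h : history R n) i v j :
  level (rcons h (i, v)) j = (level h j + (i == j))%N.
Proof. by rewrite /level -cats1 count_cat /= addn0. Qed.

Lemma exp_acc_le (val : 'I_n -> nat -> R) a :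
  (forall i, val i T <= a) -> forall f h, exp_acc T val q out f h <= a.
Proof.
move=> val_le; elim=> [|f IH] h /=; first exact: dist_mean_le.
rewrite mean_option; apply: dist_mean_le => // -[i|] /=; last exact: dist_mean_le.
by case: ifP => _; [exact: IH | exact: dist_mean_le].
Qed.

Lemma exp_acc_ge (val : 'I_n -> nat -> R) a :
  (forall i, a <= val i T) -> forall f h, a <= exp_acc T val q out f h.
Proof.
move=> val_ge; elim=> [|f IH] h /=; first exact: dist_mean_ge.
rewrite mean_option; apply: dist_mean_ge => // -[i|] /=; last exact: dist_mean_ge.
by case: ifP => _; [exact: IH | exact: dist_mean_ge].
Qed.

(* The probability that the run, with budget [f] left after history [h],
   evaluates a member of [S] at level [t + 1] or outputs a member of [S]. *)
Fixpoint reach_prob (val : 'I_n -> nat -> R) (S : pred 'I_n) (t f : nat)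
    (h : history R n) : R :=
  let stop := \sum_j out h j * (S j)%:R in
  match f with
  | 0 => stop
  | f'.+1 =>
      q h None * stop +
      \sum_i q h (Some i) *
        (if (level h i < T)%N then
           if S i && (level h i == t) then 1
           else reach_prob val S t f' (rcons h (i, val i (level h i).+1))
         else stop)
  end.

Lemma reach_prob_itv val S t f h : 0 <= reach_prob val S t f h <= 1.
Proof.
have stop_ge0 h' : 0 <= \sum_j out h' j * (S j)%:R.
  by apply: dist_mean_ge => // j; rewrite ler0n.
have stop_le1 h' : \sum_j out h' j * (S j)%:R <= 1.
  by apply: dist_mean_le => // j; rewrite lern1 leq_b1.
elim: f h => [|f IH] h /=; first by rewrite stop_ge0 stop_le1.
rewrite mean_option; apply/andP; split.
  apply: dist_mean_ge => // -[i|] //=; case: ifP => // _; case: ifP => // _.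
  by case/andP: (IH (rcons h (i, val i (level h i).+1))).
apply: dist_mean_le => // -[i|] //=; case: ifP => // _; case: ifP => // _.
by case/andP: (IH (rcons h (i, val i (level h i).+1))).
Qed.

(* Two instances that agree except on the members of [S] above level [t]
   can only be told apart by runs counted in [reach_prob]. *)
Lemma exp_acc_coupling (val val' : 'I_n -> nat -> R) (S : pred 'I_n) t lo hi :
  (forall i, lo <= val' i T) -> (forall i, val i T <= hi) ->
  (forall i b, ~~ S i || (b <= t)%N -> val i b = val' i b) ->
  forall f h, (forall i, S i -> (level h i <= t)%N) ->
  exp_acc T val q out f h <=
  exp_acc T val' q out f h + (hi - lo) * reach_prob val' S t f h.
Proof.
move=> lo_le le_hi agree.
have stopP h : \sum_j out h j * val j T <=
    \sum_j out h j * val' j T + (hi - lo) * \sum_j out h j * (S j)%:R.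
  rewrite mulr_sumr -big_split /=; apply: ler_sum => j _.
  rewrite mulrCA -mulrDr ler_wpM2l //; first by case: (out_dist h).
  case: (boolP (S j)) => Sj; last by rewrite mulr0 addr0 agree ?Sj.
  by rewrite mulr1; have := lo_le j; have := le_hi j; lra.
elim=> [|f IH] h below_t /=; first exact: stopP.
rewrite !mean_option mulr_sumr -big_split /=; apply: ler_sum => o _.
rewrite mulrCA -mulrDr ler_wpM2l //; first by case: (q_dist h).
case: o => [i|] /=; last exact: stopP.
case: ifP => _; last exact: stopP.
case: ifP => [_ | /negbT reach_i].
  rewrite mulr1; have := exp_acc_le le_hi f (rcons h (i, val i (level h i).+1)).
  have := exp_acc_ge lo_le f (rcons h (i, val' i (level h i).+1)); lra.
have below_i : ~~ S i || ((level h i).+1 <= t)%N.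
  by case: (boolP (S i)) reach_i => //= Si; rewrite ltn_neqAle => ->; apply: below_t.
rewrite agree //; apply: IH => j Sj; rewrite level_rcons.
case: (eqVneq i j) => [ij|_]; last by rewrite addn0 below_t.
by move: below_i; rewrite -ij in Sj *; rewrite Sj addn1.
Qed.

Definition capped_level (t l : nat) : R := if (l <= t)%N then l%:R else 0.

Definition cost_below (t : nat) (h : history R n) : R :=
  \sum_i capped_level t (level h i).

Lemma cost_below_nil t : cost_below t [::] = 0.
Proof.
by rewrite /cost_below big1 // => i _; rewrite /capped_level /level /= mulr0n; case: ifP.
Qed.

Lemma cost_below_rcons t h i v :
  cost_below t (rcons h (i, v)) =
  cost_below t h + (capped_level t (level h i).+1 - capped_level t (level h i)).
Proof.
rewrite /cost_below (bigD1 i) //= [in RHS](bigD1 i) //= level_rcons eqxx addn1.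
rewrite [RHS]addrC addrA subrK; congr (_ + _); apply: eq_bigr => j ji.
by rewrite level_rcons eq_sym (negbTE ji) addn0.
Qed.

Lemma cost_below_rcons_le t h i v :
  cost_below t (rcons h (i, v)) <= cost_below t h + 1.
Proof.
rewrite cost_below_rcons lerD2l /capped_level -addn1 natrD.
have := ler0n R (level h i).
by case: leqP => ?; case: leqP => ? ?; try lia; lra.
Qed.

Lemma cost_below_rcons_eq t h i v : level h i = t ->
  cost_below t (rcons h (i, v)) = cost_below t h - t%:R.
Proof.
by move=> lt; rewrite cost_below_rcons /capped_level lt ltnn leqnn sub0r.
Qed.

(* Each configuration crossing level [t] has used [t + 1] units of budget,
   which [cost_below t] stops counting. *)
Lemma sum_reach_prob_le (J : finType) (S : J -> pred 'I_n) val t :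
  (forall i, \sum_j ((S j i)%:R : R) <= 1) ->
  forall f h, \sum_j reach_prob val (S j) t f h <= (f%:R + cost_below t h) / t.+1%:R + 1.
Proof.
move=> S_disj.
have t1_gt0 : 0 < t.+1%:R :> R by rewrite ltr0n.
have stop_le1 h : \sum_j \sum_i out h i * (S j i)%:R <= 1.
  rewrite exchange_big /=; under eq_bigr => i _ do rewrite -mulr_sumr.
  exact: dist_mean_le.
have one_le f h : 1 <= (f%:R + cost_below t h) / t.+1%:R + 1.
  rewrite lerDr divr_ge0 ?(ltW t1_gt0) // addr_ge0 //.
  by apply: sumr_ge0 => i _; rewrite /capped_level; case: ifP.
elim=> [|f IH] h /=; first exact: le_trans (stop_le1 h) (one_le 0%N h).
under eq_bigr => j _ do rewrite mean_option.
rewrite exchange_big /=; under eq_bigr => o _ do rewrite -mulr_sumr.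
apply: dist_mean_le => // -[i|] /=; last exact: le_trans (stop_le1 h) (one_le _ h).
case: (level h i < T)%N; last exact: le_trans (stop_le1 h) (one_le _ h).
set h' := rcons h (i, val i (level h i).+1).
have [at_t|not_t] := eqVneq (level h i) t; last first.
  under eq_bigr => j _ do rewrite andbF.
  apply: le_trans (IH h') _; rewrite lerD2r ler_pM2r ?invr_gt0 //.
  by have := cost_below_rcons_le t h i (val i (level h i).+1); rewrite mulrSr; lra.
under eq_bigr => j _ do rewrite andbT.
apply: le_trans (_ : \sum_j ((S j i)%:R : R) + \sum_j reach_prob val (S j) t f h' <= _).
  rewrite -big_split /=; apply: ler_sum => j _.
  case: (S j i); last by rewrite add0r.
  by rewrite lerDl; case/andP: (reach_prob_itv val (S j) t f h').
apply: le_trans (lerD (S_disj i) (IH h')) _.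
rewrite (cost_below_rcons_eq _ at_t).
have -> : (f.+1%:R + cost_below t h) / t.+1%:R =
          (f%:R + (cost_below t h - t%:R)) / t.+1%:R + 1.
  by rewrite !mulrSr; field; rewrite -mulrSr pnatr_eq0.
by rewrite addrC.
Qed.

End Strategy.

Lemma dist2xx (R : realType) d (x : 'rV[R]_d) : dist2 x x = 0.
Proof. by rewrite /dist2 big1 ?sqrtr0 // => i _; rewrite subrr expr0n. Qed.

Lemma sum_sqr_sub_delta (R : comNzRingType) M a b (c : R) : (a < M)%N -> (b < M)%N ->
  \sum_(k < M) ((if k == a :> nat then c else 0) - (if k == b :> nat then c else 0)) ^+ 2 =
  if a == b then 0 else 2 * c ^+ 2.
Proof.
move=> a_lt b_lt; case: eqVneq => [<-|ab].
  by rewrite big1 // => k _; rewrite subrr expr0n.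
rewrite (bigD1 (Ordinal a_lt)) // (bigD1 (Ordinal b_lt)) /=; last first.
  by rewrite -val_eqE /= eq_sym.
have ba : b != a by rewrite eq_sym.
rewrite !eqxx (negbTE ab) (negbTE ba) big1 ?addr0 => [|k /andP[ka kb]].
  by rewrite subr0 sub0r sqrrN; ring.
by move: ka kb; rewrite -!val_eqE /= => /negbTE-> /negbTE->; rewrite subrr expr0n.
Qed.

Section Clusters.
Variables (R : realType) (eps r : R) (m N : nat).
Hypotheses (eps_gt0 : 0 < eps) (r_gt0 : 0 < r) (epsr_lt1 : eps * r < 1).
Hypothesis N_gt0 : (0 < N)%N.

(* Point [p] belongs to cluster [p %/ N]: the first [m] coordinates put
   points of distinct clusters at least [sqrt 2 / eps] apart, the last [m * N]
   ones put distinct points of a cluster exactly [r] apart. *)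
Definition cluster_point (p : nat) : 'rV[R]_(m + m * N) :=
  \row_(k < m + m * N)
    if (k < m)%N then if k == (p %/ N)%N :> nat then eps^-1 else 0
    else if (k - m == p)%N then r / Num.sqrt 2 else 0.

Definition clustered_config : seq 'rV[R]_(m + m * N) :=
  map cluster_point (iota 0 (m * N)).

Lemma dist2_cluster_point p p' : (p < m * N)%N -> (p' < m * N)%N ->
  dist2 (cluster_point p) (cluster_point p') =
  Num.sqrt ((if (p %/ N == p' %/ N)%N then 0 else 2 * eps^-1 ^+ 2) +
            (if p == p' then 0 else r ^+ 2)).
Proof.
move=> p_lt p'_lt; rewrite /dist2 big_split_ord /=; congr (Num.sqrt (_ + _)).
  under eq_bigr => k _ do rewrite !mxE /= ltn_ord.
  by apply: sum_sqr_sub_delta; rewrite ltn_divLR.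
under eq_bigr => k _ do rewrite !mxE /= ltnNge leq_addr /= addKn.
rewrite sum_sqr_sub_delta //; case: eqVneq => // _.
by rewrite expr_div_n sqr_sqrtr ?ler0n // mulrC divfK ?pnatr_eq0.
Qed.

Lemma dist2_cluster_point_same p p' : (p < m * N)%N -> (p' < m * N)%N ->
  (p %/ N = p' %/ N)%N -> p != p' -> dist2 (cluster_point p) (cluster_point p') = r.
Proof.
move=> p_lt p'_lt same pp'; rewrite dist2_cluster_point // same eqxx (negbTE pp').
by rewrite add0r sqrtr_sqr ger0_norm // (ltW r_gt0).
Qed.

Lemma dist2_cluster_point_far p p' : (p < m * N)%N -> (p' < m * N)%N ->
  (p %/ N != p' %/ N)%N -> 1 <= eps * dist2 (cluster_point p) (cluster_point p').
Proof.
move=> p_lt p'_lt far; rewrite -(mulfV (lt0r_neq0 eps_gt0)) ler_pM2l //.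
have inv_ge0 : 0 <= eps^-1 by rewrite invr_ge0 (ltW eps_gt0).
have sqr_ge0' : 0 <= if p == p' then 0 else r ^+ 2 :> R by case: ifP; rewrite ?sqr_ge0.
rewrite dist2_cluster_point // (negbTE far) -[X in X <= _](ger0_norm inv_ge0).
rewrite -sqrtr_sqr ler_sqrt ?addr_ge0 ?mulr_ge0 ?sqr_ge0 //.
apply: (@le_trans _ _ (2 * eps^-1 ^+ 2)); last by rewrite lerDl.
by rewrite ler_peMl ?sqr_ge0 // ler1n.
Qed.

Lemma dist2_cluster_point_ge p p' : (p < m * N)%N -> (p' < m * N)%N ->
  p != p' -> r <= dist2 (cluster_point p) (cluster_point p').
Proof.
move=> p_lt p'_lt pp'; have [same|far] := eqVneq (p %/ N)%N (p' %/ N)%N.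
  by rewrite dist2_cluster_point_same.
rewrite -(ler_pM2l eps_gt0); apply: ltW; apply: lt_le_trans epsr_lt1 _.
exact: dist2_cluster_point_far.
Qed.

Lemma cluster_point_inj p p' : (p < m * N)%N -> (p' < m * N)%N ->
  cluster_point p = cluster_point p' -> p = p'.
Proof.
move=> p_lt p'_lt eq_pp'; apply/eqP; apply: contraT => pp'.
by have := dist2_cluster_point_ge p_lt p'_lt pp'; rewrite eq_pp' dist2xx leNgt r_gt0.
Qed.

Lemma size_clustered_config : size clustered_config = (m * N)%N.
Proof. by rewrite size_map size_iota. Qed.

Lemma nth_clustered_config p : (p < m * N)%N -> nth 0 clustered_config p = cluster_point p.
Proof. by move=> p_lt; rewrite (nth_map 0%N) ?size_iota // nth_iota. Qed.

Lemma cluster_point_in p : (p < m * N)%N -> cluster_point p \in clustered_config.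
Proof. by move=> p_lt; apply: map_f; rewrite mem_iota. Qed.

Lemma clustered_configP x : x \in clustered_config ->
  exists2 p, (p < m * N)%N & x = cluster_point p.
Proof. by case/mapP => p; rewrite mem_iota => /andP[_ p_lt] ->; exists p. Qed.

Lemma clustered_config_uniq : uniq clustered_config.
Proof.
rewrite map_inj_in_uniq ?iota_uniq // => p p'.
by rewrite !mem_iota => /andP[_ p_lt] /andP[_ p'_lt]; apply: cluster_point_inj.
Qed.

Lemma index_cluster_point p : (p < m * N)%N -> index (cluster_point p) clustered_config = p.
Proof.
move=> p_lt; rewrite -{1}(nth_clustered_config p_lt).
by rewrite index_uniq ?size_clustered_config ?clustered_config_uniq.
Qed.

(* The first points of the clusters are optimal centers: every other point
   is at distance [r] from its cluster's center, and with only [m] centers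
   some point is not a center, hence at distance [>= r] from all of them. *)
Lemma clustered_config_radius : (0 < m)%N -> (1 < N)%N ->
  opt_cluster_radius clustered_config m r.
Proof.
move=> m_gt0 N_gt1; split.
  exists [seq cluster_point (j * N) | j <- iota 0 m]; split.
  - rewrite map_inj_in_uniq ?iota_uniq // => a b.
    rewrite !mem_iota => /andP[_ a_lt] /andP[_ b_lt] /cluster_point_inj.
    by rewrite !ltn_pmul2r // => /(_ a_lt b_lt)/eqP; rewrite eqn_pmul2r // => /eqP.
  - move=> x /mapP[a]; rewrite mem_iota => /andP[_ a_lt] ->.
    by rewrite cluster_point_in ?ltn_pmul2r.
  - by rewrite size_map size_iota.
  move=> x /clustered_configP[p p_lt ->].
  have c_lt : (p %/ N * N < m * N)%N by rewrite ltn_pmul2r // ltn_divLR.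
  exists (cluster_point (p %/ N * N)%N); first by apply: map_f; rewrite mem_iota ltn_divLR.
  have [center|not_center] := eqVneq p (p %/ N * N)%N.
    by rewrite -center dist2xx (ltW r_gt0).
  by rewrite dist2_cluster_point_same // mulnK.
move=> C C_uniq C_sub C_size.
have [x xX xC] : exists2 x, x \in clustered_config & x \notin C.
  apply/hasP; rewrite has_predC; apply: contraT => /negPn/allP C_all.
  have := uniq_leq_size clustered_config_uniq C_all.
  by rewrite size_clustered_config C_size -{2}[m]muln1 leq_pmul2l // leqNgt N_gt1.
exists x => // c cC; case/clustered_configP: xX xC => p p_lt -> xC.
have [p' p'_lt c_eq] := clustered_configP (C_sub c cC).
rewrite c_eq; apply: dist2_cluster_point_ge => //; apply: contraNneq xC => ->.
by rewrite -c_eq.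
Qed.

End Clusters.

Section Curves.
Variables (R : realType) (T N t0 : nat) (e : R).
Hypotheses (T_gt0 : (0 < T)%N) (e_ge0 : 0 <= e) (e_le1 : e <= 1).

Definition lin_curve (w : R) (b : nat) : R := w * (b%:R / T%:R).

(* [base_curve j]: the configurations outside cluster [j] stop improving
   after level [t0]; for [j] beyond the last cluster, all of them do. *)
Definition base_curve (j i b : nat) : R :=
  if (i %/ N == j)%N then lin_curve e b else lin_curve e (minn b t0).

Definition hard_curve (j l i b : nat) : R :=
  if i == (j * N + l)%N then lin_curve 1 b else base_curve j i b.

Let T_gt0R : 0 < T%:R :> R. Proof. by rewrite ltr0n. Qed.

Lemma lin_curve_ge0 w b : 0 <= w -> 0 <= lin_curve w b.
Proof. by move=> w_ge0; rewrite mulr_ge0 ?divr_ge0 ?(ltW T_gt0R). Qed.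

Lemma lin_curve_le w b : 0 <= w -> (b <= T)%N -> lin_curve w b <= w.
Proof.
move=> w_ge0 bT; rewrite -[X in _ <= X]mulr1 ler_wpM2l //.
by rewrite ler_pdivrMr // mul1r ler_nat.
Qed.

Lemma lin_curveT w : lin_curve w T = w.
Proof. by rewrite /lin_curve divff ?mulr1 // lt0r_neq0. Qed.

Lemma lin_curve0 w : lin_curve w 0 = 0.
Proof. by rewrite /lin_curve mul0r mulr0. Qed.

Lemma lin_curveM w b : lin_curve w b = w * lin_curve 1 b.
Proof. by rewrite /lin_curve mul1r. Qed.

Lemma lin_curve_mono w b1 b2 : 0 <= w -> (b1 <= b2)%N -> lin_curve w b1 <= lin_curve w b2.
Proof. by move=> w_ge0 b12; rewrite ler_wpM2l // ler_pM2r ?invr_gt0 // ler_nat. Qed.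

Lemma lin_curve_concave w b1 b2 b3 : 0 <= w -> (b1 + b3 <= b2 + b2)%N ->
  lin_curve w b1 - lin_curve w b2 <= lin_curve w b2 - lin_curve w b3.
Proof.
move=> w_ge0 b123; rewrite /lin_curve -!mulrBr ler_wpM2l // -!mulrBl.
rewrite ler_pM2r ?invr_gt0 //.
have : (b1 + b3)%:R <= (b2 + b2)%:R :> R by rewrite ler_nat.
by rewrite !natrD; lra.
Qed.

Lemma base_curve_ge0 j i b : 0 <= base_curve j i b.
Proof. by rewrite /base_curve; case: ifP => _; apply: lin_curve_ge0. Qed.

Lemma base_curveT_le j i : base_curve j i T <= e.
Proof. by rewrite /base_curve; case: ifP => _; apply: lin_curve_le; rewrite ?geq_minl. Qed.

Lemma base_curve_out j i b : (i %/ N != j)%N -> base_curve j i b = lin_curve e (minn b t0).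
Proof. by rewrite /base_curve => /negbTE->. Qed.

Lemma base_curve_low j i b : (b <= t0)%N -> base_curve j i b = lin_curve e b.
Proof. by move=> bt0; rewrite /base_curve (minn_idPl bt0); case: ifP. Qed.

Lemma hard_curve_base j l i b : i != (j * N + l)%N -> hard_curve j l i b = base_curve j i b.
Proof. by rewrite /hard_curve => /negbTE->. Qed.

Lemma hard_curve0 j l i : hard_curve j l i 0 = base_curve j i 0.
Proof.
by rewrite /hard_curve /base_curve min0n !lin_curve0; case: ifP => //; case: ifP.
Qed.

Lemma hard_curve_peak j l : hard_curve j l (j * N + l) T = 1.
Proof. by rewrite /hard_curve eqxx lin_curveT. Qed.

Lemma hard_curve_ge0 j l i b : 0 <= hard_curve j l i b.
Proof. by rewrite /hard_curve; case: ifP => _; rewrite ?lin_curve_ge0 ?base_curve_ge0. Qed.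

Lemma hard_curve_le1 j l i b : (b <= T)%N -> hard_curve j l i b <= 1.
Proof.
move=> bT; rewrite /hard_curve /base_curve.
case: ifP => _; first exact: lin_curve_le.
by case: ifP => _; apply: le_trans e_le1; apply: lin_curve_le; rewrite // geq_min bT.
Qed.

Lemma hard_curve_mono j l i b1 b2 :
  (b1 <= b2)%N -> hard_curve j l i b1 <= hard_curve j l i b2.
Proof.
move=> b12; rewrite /hard_curve /base_curve.
by case: ifP => _; [|case: ifP => _]; apply: lin_curve_mono => //; lia.
Qed.

Lemma hard_curve_concave j l i b : (1 <= b)%N ->
  hard_curve j l i b.+1 - hard_curve j l i b <= hard_curve j l i b - hard_curve j l i b.-1.
Proof.
move=> b_ge1; rewrite /hard_curve /base_curve.
by case: ifP => _; [|case: ifP => _]; apply: lin_curve_concave => //; lia.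
Qed.

Lemma hard_curve_same_cluster j l i i' b : (l < N)%N -> (i %/ N = i' %/ N)%N ->
  e * hard_curve j l i' b <= hard_curve j l i b.
Proof.
move=> l_lt same; have p_cluster : ((j * N + l) %/ N = j)%N.
  by rewrite divnMDl ?divn_small ?addn0 //; case: N l_lt.
have e_le x : 0 <= x -> e * x <= x by move=> x_ge0; rewrite ler_piMl.
rewrite /hard_curve /base_curve.
have [ip|ip] := eqVneq i (j * N + l)%N; have [i'p|i'p] := eqVneq i' (j * N + l)%N.
- by rewrite e_le ?lin_curve_ge0.
- have x_ge0 : 0 <= lin_curve 1 b by apply: lin_curve_ge0.
  rewrite -same ip p_cluster eqxx [lin_curve e b]lin_curveM.
  by apply: le_trans (e_le _ _) (e_le _ x_ge0); rewrite mulr_ge0.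
- by rewrite same i'p p_cluster eqxx -lin_curveM.
- by rewrite same; case: ifP => _; rewrite e_le ?lin_curve_ge0.
Qed.

End Curves.

Lemma mix_le (R : realFieldType) (e x theta H P : R) :
  0 <= e -> 0 <= x <= theta -> theta <= 1 -> 0 <= H <= 1 -> H <= P ->
  e * x + (e - e * x) * H <= e * (theta + (1 - theta) * P).
Proof.
move=> e_ge0 /andP[x_ge0 x_le] theta_le1 /andP[H_ge0 H_le1] H_le.
have : 0 <= e * ((theta - x) * (1 - H)) by rewrite !mulr_ge0 // subr_ge0.
have : 0 <= e * ((1 - theta) * (P - H)) by rewrite !mulr_ge0 // subr_ge0.
nra.
Qed.

Section LowerBound.
Variables (R : realType) (m N T t0 B : nat) (e : R).
Hypotheses (m_gt0 : (0 < m)%N) (N_gt0 : (0 < N)%N) (T_gt0 : (0 < T)%N).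
Hypotheses (e_ge0 : 0 <= e) (e_le1 : e <= 1).
Variable n : nat.
Hypothesis n_eq : n = (m * N)%N.
Variables (q : history R n -> {ffun option 'I_n -> R})
          (out : history R n -> {ffun 'I_n -> R}).
Hypotheses (q_dist : forall h, is_dist (q h)) (out_dist : forall h, is_dist (out h)).

Local Notation base j := (fun i : 'I_n => base_curve T N t0 e j i).
Local Notation hard j l := (fun i : 'I_n => hard_curve T N t0 e j l i).
Local Notation reach := (reach_prob T q out).

(* In expectation at most [B / (t0 + 1) + 1] clusters are pushed beyond level
   [t0] or output, so some cluster [j] is with probability at most a [1 / m]
   share of that; lifting the plateau of cluster [j] matters only on those
   runs. *)
Lemma exp_acc_base_curve_le theta : t0%:R <= theta * T%:R -> theta <= 1 ->
  exists2 j, (j < m)%N & exp_acc T (base j) q out B [::] <=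
    e * (theta + (1 - theta) * ((B%:R / t0.+1%:R + 1) / m%:R)).
Proof.
move=> t0_le theta_le1.
pose cluster j := fun i : 'I_n => (i %/ N == j)%N.
have [j reach_j] : exists j : 'I_m, reach (base m) (cluster j) t0 B [::] <=
    (B%:R / t0.+1%:R + 1) / m%:R.
  apply: exists_le_mean => //.
  have := sum_reach_prob_le T q_dist out_dist (S := fun j : 'I_m => cluster j)
    (base m) t0 _ B [::].
  rewrite cost_below_nil addr0; apply => i.
  by apply: sum_indicator_le1 => a b /eqP ia /eqP ib; apply: val_inj; rewrite /= -ia -ib.
exists j => //.
have out_all (i : 'I_n) : (i %/ N != m)%N by rewrite neq_ltn ltn_divLR // -n_eq ltn_ord.
pose lo := lin_curve T e (minn T t0).
have base_mT (i : 'I_n) : base_curve T N t0 e m i T = lo by rewrite base_curve_out.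
have lo_le (i : 'I_n) : lo <= base_curve T N t0 e m i T by rewrite base_mT.
have le_lo (i : 'I_n) : base_curve T N t0 e m i T <= lo by rewrite base_mT.
have agree (i : 'I_n) b : ~~ cluster j i || (b <= t0)%N ->
    base_curve T N t0 e j i b = base_curve T N t0 e m i b.
  rewrite /cluster; case: eqVneq => [_ /= bt0|ij _]; first by rewrite !base_curve_low.
  by rewrite !base_curve_out.
have lifted := exp_acc_coupling q_dist out_dist (S := cluster j) lo_le
  (fun i => base_curveT_le N t0 T_gt0 e_ge0 j i) agree B (h := [::]) (fun i _ => leq0n t0).
have flat := exp_acc_le (T := T) q_dist out_dist (val := base m) le_lo B [::].
have x_itv : (0 : R) <= (minn T t0)%:R / T%:R <= theta.
  rewrite divr_ge0 ?ler0n //= ler_pdivrMr ?ltr0n //; apply: le_trans t0_le.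
  by rewrite ler_nat geq_minr.
have := reach_prob_itv T q_dist out_dist (base m) (cluster j) t0 B [::].
move=> /(mix_le e_ge0 x_itv theta_le1)/(_ reach_j); apply: le_trans.
by apply: le_trans lifted _; rewrite lerD2r.
Qed.

(* Some point of the cluster is evaluated at all, or output, with
   probability at most [(B + 1) / N]; only then can its peak be noticed. *)
Lemma exp_acc_hard_curve_le j :
  exists2 l, (l < N)%N & exp_acc T (hard j l) q out B [::] <=
    exp_acc T (base j) q out B [::] + B.+1%:R / N%:R.
Proof.
pose point l := fun i : 'I_n => i == (j * N + l)%N :> nat.
have [l reach_l] : exists l : 'I_N, reach (base j) (point l) 0 B [::] <= B.+1%:R / N%:R.
  apply: exists_le_mean => //.
  have := sum_reach_prob_le T q_dist out_dist (S := fun l : 'I_N => point l)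
    (base j) 0 _ B [::].
  rewrite cost_below_nil addr0 mulr1n divr1 -mulrSr; apply => i.
  apply: sum_indicator_le1 => a b /eqP ia /eqP ib; apply: val_inj.
  by apply/eqP; rewrite -(eqn_add2l (j * N)) -ia -ib.
exists l => //.
have agree (i : 'I_n) b : ~~ point l i || (b <= 0)%N ->
    hard_curve T N t0 e j l i b = base_curve T N t0 e j i b.
  by case/orP => [/hard_curve_base//|]; rewrite leqn0 => /eqP->; apply: hard_curve0.
have := exp_acc_coupling q_dist out_dist (S := point l) (lo := 0) (hi := 1)
  (fun i => base_curve_ge0 N t0 T_gt0 e_ge0 j i T)
  (fun i => hard_curve_le1 N t0 T_gt0 e_ge0 e_le1 j l i (leqnn T))
  agree B (h := [::]) (fun i _ => leqnn 0).
by rewrite subr0 mul1r => /le_trans; apply; rewrite lerD2l.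
Qed.

End LowerBound.

Lemma ratio_geW (R : realType) (a b c : R) :
  0 <= a -> 0 <= b -> c <= 1 -> c * b <= a -> ratio_ge a b c.
Proof.
move=> a_ge0 b_ge0 c_le1 cb_le; split=> // /eqP b_neq0.
by rewrite ler_pdivlMr // lt0r b_neq0.
Qed.

Section HardInstance.
Variables (R : realType) (eps r : R) (m N T t0 : nat).
Hypotheses (eps_gt0 : 0 < eps) (r_gt0 : 0 < r) (epsr_lt1 : eps * r < 1).
Hypotheses (N_gt0 : (0 < N)%N) (T_gt0 : (0 < T)%N).

Local Notation X := (clustered_config eps r m N).
Local Notation e := (1 - eps * r).

Let e_ge0 : 0 <= e. Proof. by rewrite subr_ge0 (ltW epsr_lt1). Qed.
Let e_le1 : e <= 1. Proof. by rewrite gerBl mulr_ge0 ?(ltW eps_gt0) ?(ltW r_gt0). Qed.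

Definition hard_instance (j l : nat) (x : 'rV[R]_(m + m * N)) (b : nat) : R :=
  if x \in X then hard_curve T N t0 e j l (index x X) b else 0.

Lemma hard_instance_point j l p b : (p < m * N)%N ->
  hard_instance j l (cluster_point eps r m N p) b = hard_curve T N t0 e j l p b.
Proof. by move=> p_lt; rewrite /hard_instance cluster_point_in // index_cluster_point. Qed.

Lemma hard_instance_range j l : uvp_range T (hard_instance j l).
Proof.
move=> x b /andP[_ bT]; rewrite /hard_instance; case: ifP => _; last by rewrite lexx ler01.
by rewrite hard_curve_ge0 // hard_curve_le1.
Qed.

Lemma hard_instance_monotone j l : uvp_monotone T (hard_instance j l).
Proof.
move=> x b1 b2 _ b12 _; rewrite /hard_instance.
by case: ifP => // _; apply: hard_curve_mono.
Qed.

Lemma hard_instance_concave j l : uvp_concave T X (hard_instance j l).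
Proof.
move=> _ /clustered_configP[p p_lt ->] b b_ge2 _; rewrite !hard_instance_point //.
by apply: hard_curve_concave => //; apply: ltnW.
Qed.

Lemma hard_instance_smooth j l : (l < N)%N -> uvp_smooth T X eps (hard_instance j l).
Proof.
move=> l_lt _ _ /clustered_configP[p p_lt ->] /clustered_configP[p' p'_lt ->] b _.
rewrite !hard_instance_point //; apply: ratio_geW; rewrite ?hard_curve_ge0 //.
  by rewrite gerBl mulr_ge0 ?(ltW eps_gt0) ?sqrtr_ge0.
have [same|far] := eqVneq (p %/ N)%N (p' %/ N)%N; last first.
  apply: (@le_trans _ _ 0); last exact: hard_curve_ge0.
  rewrite mulr_le0_ge0 ?hard_curve_ge0 // subr_le0.
  exact: dist2_cluster_point_far.
have [<-|pp'] := eqVneq p p'; first by rewrite dist2xx mulr0 subr0 mul1r.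
by rewrite dist2_cluster_point_same //; apply: hard_curve_same_cluster.
Qed.

Lemma clustered_lower_bound theta B : (0 < m)%N -> (1 < N)%N ->
  theta <= 1 -> t0%:R <= theta * T%:R ->
  uniq X /\ opt_cluster_radius X m r /\
  forall (q : history R (size X) -> {ffun option 'I_(size X) -> R})
         (out : history R (size X) -> {ffun 'I_(size X) -> R}),
    (forall h, is_dist (q h)) -> (forall h, is_dist (out h)) ->
    exists A : 'rV[R]_(m + m * N) -> nat -> R,
      [/\ uvp_range T A, uvp_monotone T A, uvp_smooth T X eps A, uvp_concave T X A &
          exists2 xstar, xstar \in X &
            [/\ forall x, x \in X -> A x T <= A xstar T, A xstar T = 1 &
                exp_acc T (fun i b => A (nth 0 X i) b) q out B [::] <=
                e * (theta + (1 - theta) * ((B%:R / t0.+1%:R + 1) / m%:R)) +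
                B.+1%:R / N%:R]].
Proof.
move=> m_gt0 N_gt1 theta_le1 t0_le.
split; first exact: clustered_config_uniq.
split; first exact: clustered_config_radius.
move=> q out q_dist out_dist; have size_X := size_clustered_config eps r m N.
have [j j_lt base_le] := exp_acc_base_curve_le B m_gt0 N_gt0 T_gt0 e_ge0 size_X
  q_dist out_dist t0_le theta_le1.
have [l l_lt hard_le] :=
  exp_acc_hard_curve_le t0 B N_gt0 T_gt0 e_ge0 e_le1 q_dist out_dist j.
have p_lt : (j * N + l < m * N)%N.
  apply: (@leq_trans (j.+1 * N)); first by rewrite mulSn addnC ltn_add2r.
  by rewrite leq_mul2r j_lt orbT.
exists (hard_instance j l); split.
- exact: hard_instance_range.
- exact: hard_instance_monotone.
- exact: hard_instance_smooth.
- exact: hard_instance_concave.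
exists (cluster_point eps r m N (j * N + l)); first exact: cluster_point_in.
split; rewrite ?hard_instance_point // ?hard_curve_peak //.
  by move=> _ /clustered_configP[p ? ->]; rewrite hard_instance_point // hard_curve_le1.
have -> : (fun (i : 'I_(size X)) b => hard_instance j l (nth 0 X i) b) =
          (fun (i : 'I_(size X)) b => hard_curve T N t0 e j l i b).
  apply/boolp.funext => i; apply/boolp.funext => b.
  have i_lt : (i < m * N)%N := leq_trans (ltn_ord i) (eq_leq size_X).
  by rewrite nth_clustered_config // hard_instance_point.
by apply: le_trans hard_le _; rewrite lerD2r.
Qed.

End HardInstance.

(* [B / (t0 + 1) < k / theta] where [k := B / T + 1], while [m >= beta k]. *)
Lemma budget_share_lt (R : realFieldType) (theta beta : R) (T B t0 m : nat) :
  0 < theta < 1 -> 1 < beta -> (0 < T)%N -> theta * T%:R < t0.+1%:R ->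
  beta * (B %/ T).+1%:R <= m%:R ->
  (1 - theta) * ((B%:R / t0.+1%:R + 1) / m%:R) < 1 / (theta * (beta - 1)).
Proof.
move=> /andP[theta_gt0 theta_lt1] beta_gt1 T_gt0 t0_gt m_ge.
set k := (B %/ T).+1; have k_ge1 : 1 <= k%:R :> R by rewrite ler1n.
have T_gt0R : 0 < T%:R :> R by rewrite ltr0n.
have t1_gt0 : 0 < t0.+1%:R :> R by rewrite ltr0n.
have m_gt0 : 0 < m%:R :> R by apply: lt_le_trans m_ge; rewrite mulr_gt0 //; lra.
set u := B%:R / t0.+1%:R.
have u_ge0 : 0 <= u by rewrite divr_ge0 ?ler0n.
have u_lt : u * theta < k%:R.
  rewrite -(ltr_pM2r T_gt0R) -mulrA -natrM.
  apply: (@le_lt_trans _ _ B%:R); last by rewrite ltr_nat ltn_ceil.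
  by rewrite -[X in _ <= X](divfK (lt0r_neq0 t1_gt0)) ler_wpM2l // (ltW t0_gt).
have share_lt : (1 - theta) * (u + 1) * theta < k%:R by nra.
rewrite ltr_pdivlMr ?mulr_gt0 ?subr_gt0 //.
rewrite (_ : (1 - theta) * ((u + 1) / m%:R) * (theta * (beta - 1)) =
             (1 - theta) * (u + 1) * theta * (beta - 1) / m%:R); last first.
  by field; rewrite lt0r_neq0.
have : (1 - theta) * (u + 1) * theta * (beta - 1) < k%:R * (beta - 1).
  by rewrite ltr_pM2r ?subr_gt0.
rewrite ltr_pdivrMr // mul1r => /lt_le_trans; apply; apply: le_trans m_ge.
by rewrite mulrC mulrBl mul1r gerBl ler0n.
Qed.

Lemma abs_ceil_ge (R : realType) (x : R) : 0 <= x -> x <= `|Num.ceil x|%N%:R.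
Proof.
move=> x_ge0; rewrite natr_absz ger0_norm ?ceil_ge // ceil_ge0.
by apply: lt_le_trans x_ge0; rewrite ltrN10.
Qed.

Lemma exists_nat_div_le (R : realType) (a b : R) : 0 < b ->
  exists2 N : nat, (1 < N)%N & a / N%:R <= b.
Proof.
move=> b_gt0; exists (Num.truncn (b^-1 * a)).+2 => //.
rewrite ler_pdivrMr ?ltr0n // -ler_pdivrMl //; apply/ltW.
by apply: lt_le_trans (truncnS_gt _) _; rewrite ler_nat leqnSn.
Qed.

Theorem theorem8 (R : realType) (eps beta theta r : R) (T B : nat) :
  0 < eps -> 1 < beta -> 0 < theta < 1 -> (0 < T)%N -> (T <= B)%N ->
  0 < r -> eps * r < 1 ->
  let k := (B %/ T).+1 in
  let m := `|Num.ceil (beta * k%:R)|%N in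
  exists (d : nat) (X : seq 'rV[R]_d),
    uniq X /\ opt_cluster_radius X m r /\
    forall (q : history R (size X) -> {ffun option 'I_(size X) -> R})
           (out : history R (size X) -> {ffun 'I_(size X) -> R}),
      (forall h, is_dist (q h)) -> (forall h, is_dist (out h)) ->
      exists A : 'rV[R]_d -> nat -> R,
        [/\ uvp_range T A, uvp_monotone T A, uvp_smooth T X eps A,
            uvp_concave T X A &
            exists2 xstar, xstar \in X &
              [/\ forall x, x \in X -> A x T <= A xstar T,
                  0 < A xstar T &
                  exp_acc T (fun i b => A (nth 0 X i) b) q out B [::]
                  <= (theta + 1 / (theta * (beta - 1))) * (1 - eps * r)
                     * A xstar T]].
Proof.
move=> eps_gt0 beta_gt1 theta_itv T_gt0 TB r_gt0 epsr_lt1 k m.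
have /andP[theta_gt0 theta_lt1] := theta_itv.
pose t0 := Num.truncn (theta * T%:R).
have t0_le : t0%:R <= theta * T%:R by rewrite truncn_le mulr_ge0 ?ler0n ?(ltW theta_gt0).
have m_ge : beta * k%:R <= m%:R by apply: abs_ceil_ge; rewrite mulr_ge0 ?ler0n //; lra.
have m_gt0 : (0 < m)%N.
  by rewrite -(ltr0n R); apply: lt_le_trans m_ge; rewrite mulr_gt0 ?ltr0n //; lra.
pose P : R := (B%:R / t0.+1%:R + 1) / m%:R.
have share : (1 - theta) * P < 1 / (theta * (beta - 1)).
  exact: budget_share_lt theta_itv beta_gt1 T_gt0 (truncnS_gt _) m_ge.
have e_gt0 : 0 < 1 - eps * r by rewrite subr_gt0.
have slack_gt0 : 0 < 1 / (theta * (beta - 1)) - (1 - theta) * P by rewrite subr_gt0.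
have [N N_gt1 N_le] := exists_nat_div_le B.+1%:R (mulr_gt0 e_gt0 slack_gt0).
have [X_uniq [X_radius lower]] := clustered_lower_bound eps_gt0 r_gt0 epsr_lt1
  (ltnW N_gt1) T_gt0 B m_gt0 N_gt1 (ltW theta_lt1) t0_le.
exists (m + m * N)%N, (clustered_config eps r m N); do 2!split => //.
move=> q out q_dist out_dist.
have [A [? ? ? ? [xs xs_in [xs_max xs_one acc_le]]]] := lower q out q_dist out_dist.
exists A; split => //; exists xs => //; split => //; rewrite xs_one ?ltr01 // mulr1.
by apply: le_trans acc_le _; move: N_le; rewrite -/P; nra.
Qed.
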